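(* Let $\mathcal{C}=(\mathcal{L},\mathcal{P})$ be a combinatorial line arrangement with ordered lines $\mathcal{L}=\{\ell_0,\ldots,\ell_n\}$, and let $\Gamma(\mathcal{C})$ be its incidence graph. Then there is a one-to-one correspondence between the elements of $\mathbf{nbc}(\mathcal{C})$ and a set of independent cycles of $\Gamma(\mathcal{C})$ forming a basis of its cycle space; in particular the first Betti number $b_1(\Gamma(\mathcal{C}))$ equals $|\mathbf{nbc}(\mathcal{C})|$.
   Context: A combinatorial line arrangement is a pair $\mathcal{C}=(\mathcal{L},\mathcal{P})$ with $\mathcal{L}$ a finite set (''lines'') and $\mathcal{P}\subset 2^{\mathcal{L}}$ (''intersection points'') such that every $P\in\mathcal{P}$ has $|P|\ge2$ and any two distinct lines lie in a unique common $P\in\mathcal{P}$. Lines are ordered $\ell_0,\ldots,\ell_n$ and points are identified with index sets $I\subset\{0,\ldots,n\}$. The incidence graph $\Gamma(\mathcal{C})$ is the bipartite graph with vertex set $\mathcal{L}\cup\mathcal{P}$ and edges $(\ell,P)$ for $\ell\in P$. A pair $(j,k)$ with $1\le j<k\le n$ is an nbc if there is a point $P_I$ with $j,k\in I$ and $j=\min I$; $\mathbf{nbc}(\mathcal{C})$ is the set of these pairs. *)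

From mathcomp Require Import all_boot all_order all_algebra.
Set Implicit Arguments. Unset Strict Implicit. Unset Printing Implicit Defensive.

(* Lines are l_0,...,l_n, i.e. the type 'I_n.+1.  A point is identified with
   its index set I : {set 'I_n.+1}; the arrangement is given by its set of
   points P. *)
Section CLA.
Variable n : nat.
Notation line := 'I_n.+1.
Notation point := {set 'I_n.+1}.

Definition is_cla (P : {set point}) : Prop :=
  (forall I, I \in P -> 2 <= #|I|) /\
  (forall j k : line, j != k ->
     exists! I, I \in P /\ j \in I /\ k \in I).

Definition nbc (P : {set point}) : {set line * line} :=
  [set jk : line * line | [&& 1 <= jk.1, jk.1 < jk.2 &
     [exists I in P, [&& jk.1 \in I, jk.2 \in I &
                        [forall i in I, jk.1 <= i]]]]].

Definition vertex := (line + point)%type.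

Definition is_vertex (P : {set point}) (v : vertex) : bool :=
  match v with inl _ => true | inr J => J \in P end.

Definition vertices (P : {set point}) : {set vertex} :=
  [set v | is_vertex P v].

Definition adj (P : {set point}) : rel vertex := fun u v =>
  match u, v with
  | inl l, inr J => (J \in P) && (l \in J)
  | inr J, inl l => (J \in P) && (l \in J)
  | _, _ => false
  end.

Definition edge := (line * point)%type.

Definition edges (P : {set point}) : {set edge} :=
  [set e | (e.2 \in P) && (e.1 \in e.2)].

Definition edge_of (u v : vertex) : option edge :=
  match u, v with
  | inl l, inr J => Some (l, J)
  | inr J, inl l => Some (l, J)
  | _, _ => None
  end.

Definition cycle_edges (s : seq vertex) : {set edge} :=
  [set e | has (fun uv : vertex * vertex => edge_of uv.1 uv.2 == Some e)
                (zip s (rot 1 s))].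

Definition is_graph_cycle (P : {set point}) (F : {set edge}) : Prop :=
  exists s : seq vertex,
    [/\ uniq s, 3 <= size s, cycle (adj P) s & F = cycle_edges s].

Definition deg (F : {set edge}) (v : vertex) : nat :=
  match v with
  | inl l => #|[set e in F | e.1 == l]|
  | inr J => #|[set e in F | e.2 == J]|
  end.

(* the cycle space over F_2 = the even subgraphs *)
Definition in_cycle_space (P : {set point}) (F : {set edge}) : Prop :=
  F \subset edges P /\ forall v, ~~ odd (deg F v).

(* sum in the cycle space (over F_2) = symmetric difference *)
Definition symdiff (A B : {set edge}) : {set edge} := (A :\: B) :|: (B :\: A).

Definition xorsum (T : finType) (S : {set T}) (f : T -> {set edge}) :
  {set edge} := \big[symdiff/set0]_(x in S) f x.

Definition ncomp (P : {set point}) : nat :=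
  #|[set [set w in vertices P | connect (adj P) v w] | v in vertices P]|.

Definition betti1 (P : {set point}) : int :=
  (#|edges P|%:Z - #|vertices P|%:Z + (ncomp P)%:Z)%R.

End CLA.

From mathcomp Require Import all_boot all_order all_algebra.
From mathcomp Require Import zify.
Set Implicit Arguments. Unset Strict Implicit. Unset Printing Implicit Defensive.

(* Root the incidence graph at l_0.  The edges at the points on l_0, together
   with the edge from every other point to its lowest line, form a spanning
   tree; the remaining edges (l_k, P), with l_0 not on P and l_k not lowest on
   P, are in bijection with the nbc pairs (min P, k).  For an nbc pair (j, k)
   the hexagon l_0 P_0j l_j P_jk l_k P_0k is a cycle whose only non-tree edge
   is (l_k, P_jk).  These fundamental cycles are therefore independent, and
   they span the cycle space because an even subgraph of a tree is empty.
   Finally the graph is connected and the tree has |V| - 1 edges, so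
   b_1 = |E| - |V| + 1 = |nbc|. *)

Lemma card_set_seq (T : finType) (s : seq T) (a : pred T) :
  uniq s -> #|[set x in [set y in s] | a x]| = count a s.
Proof.
move=> s_uniq; rewrite -size_filter -(card_uniqP _) ?filter_uniq //.
by apply: eq_card => x; rewrite !inE mem_filter andbC.
Qed.

Section CycleSpace.
Variable n : nat.
Implicit Types (A B G : {set edge n}) (e : edge n).

Lemma in_symdiff A B e : (e \in symdiff A B) = (e \in A) (+) (e \in B).
Proof. by rewrite !inE; case: (e \in A); case: (e \in B). Qed.

Lemma symdiff_eq0 A B : symdiff A B = set0 -> A = B.
Proof.
move/setP=> AB; apply/setP=> e; move: (AB e).
by rewrite in_symdiff inE; case: (e \in A); case: (e \in B).
Qed.

Lemma odd_card_symdiff A B : odd #|symdiff A B| = odd #|A| (+) odd #|B|.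
Proof.
have disj : (A :\: B) :&: (B :\: A) = set0.
  by apply/setP=> e; rewrite !inE; case: (e \in A); case: (e \in B).
rewrite /symdiff cardsU disj cards0 subn0.
rewrite -(cardsID B A) -(cardsID A B) setIC !oddD.
by case: (odd _); case: (odd _); case: (odd _).
Qed.

Lemma odd_deg_symdiff A B v :
  odd (deg (symdiff A B) v) = odd (deg A v) (+) odd (deg B v).
Proof.
by case: v => [l|J] /=; rewrite -odd_card_symdiff; congr (odd _); apply: eq_card => e;
  rewrite !inE; case: (e \in A); case: (e \in B); case: (_ == _).
Qed.

Lemma odd_deg_point G e :
  e \in G -> {in G, forall e', e'.2 = e.2 -> e' = e} -> odd (deg G (inr e.2)).
Proof.
move=> eG uniq_e; rewrite /= (_ : [set _ in G | _] = [set e]) ?cards1 //.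
by apply/setP=> e'; rewrite !inE; apply/andP/eqP=> [[e'G /eqP/uniq_e->]|->]; rewrite ?eqxx.
Qed.

Lemma odd_deg_line G e :
  e \in G -> {in G, forall e', e'.1 = e.1 -> e' = e} -> odd (deg G (inl e.1)).
Proof.
move=> eG uniq_e; rewrite /= (_ : [set _ in G | _] = [set e]) ?cards1 //.
by apply/setP=> e'; rewrite !inE; apply/andP/eqP=> [[e'G /eqP/uniq_e->]|->]; rewrite ?eqxx.
Qed.

Variable P : {set {set 'I_n.+1}}.

Lemma in_cycle_space0 : in_cycle_space P set0.
Proof. by split=> [|[l|J]]; rewrite ?sub0set //= setIdE set0I cards0. Qed.

Lemma in_cycle_space_symdiff A B :
  in_cycle_space P A -> in_cycle_space P B -> in_cycle_space P (symdiff A B).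
Proof.
move=> [/subsetP sAE evA] [/subsetP sBE evB]; split=> [|v].
  by apply/subsetP=> e; rewrite in_symdiff; case: (boolP (e \in A)) => [/sAE|_] //= /sBE.
by rewrite odd_deg_symdiff (negbTE (evA v)) (negbTE (evB v)).
Qed.

Section XorSum.
Variables (T : finType) (f : T -> {set edge n}).
Implicit Types (S D : {set T}).

Lemma in_xorsum S e : (e \in xorsum S f) = \big[addb/false]_(x in S) (e \in f x).
Proof.
by apply: (big_morph (fun A => e \in A)) => [A B|]; rewrite ?in_symdiff ?inE.
Qed.

Lemma in_cycle_space_xorsum S :
  {in S, forall x, in_cycle_space P (f x)} -> in_cycle_space P (xorsum S f).
Proof.
move=> Sf; apply: big_ind => //; [exact: in_cycle_space0 | exact: in_cycle_space_symdiff].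
Qed.

Lemma xorsum_indep_injective D :
  (forall S, S \subset D -> S != set0 -> xorsum S f != set0) -> {in D &, injective f}.
Proof.
move=> indep p q pD qD fpq; apply/eqP/negPn/negP=> pq.
have sub2 : [set p; q] \subset D by rewrite subUset !sub1set pD qD.
have xor0 : xorsum [set p; q] f = set0.
  apply/setP=> e; rewrite in_xorsum big_setU1 /= ?big_set1 ?fpq ?addbb ?inE //.
suff : [set p; q] != set0 by move/(indep _ sub2); rewrite xor0 eqxx.
by apply/set0Pn; exists p; rewrite !inE eqxx.
Qed.

End XorSum.
End CycleSpace.

Section Arrangement.
Variables (n : nat) (P : {set {set 'I_n.+1}}).
Hypothesis hC : is_cla P.
Local Notation line := 'I_n.+1.
Local Notation point := {set 'I_n.+1}.
Implicit Types (j k l : line) (I J : point) (e : edge n).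

Definition meet j k : point := odflt set0 [pick I in P | (j \in I) && (k \in I)].

Lemma meetP j k : j != k -> [/\ meet j k \in P, j \in meet j k & k \in meet j k].
Proof.
move=> jk; rewrite /meet; case: pickP => [I /andP[-> /andP[-> ->]] //|none].
have [I [[IP [jI kI]] _]] := hC.2 j k jk.
by move: (none I); rewrite IP jI kI.
Qed.

Lemma meet_eq j k I : j != k -> I \in P -> j \in I -> k \in I -> meet j k = I.
Proof.
move=> jk IP jI kI; have [I0 [_ uniqI0]] := hC.2 j k jk.
by have [mP jm km] := meetP jk; rewrite -(uniqI0 I) // -(uniqI0 (meet j k)).
Qed.

Lemma meet0P l : l != ord0 -> [/\ meet ord0 l \in P, ord0 \in meet ord0 l & l \in meet ord0 l].
Proof. by move=> l0; apply: meetP; rewrite eq_sym. Qed.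

Lemma point_neq0 I : I \in P -> exists l, l \in I.
Proof. by move=> /hC.1 I2; apply/card_gt0P; apply: leq_trans I2. Qed.

(* [minl J = ord0] when [J] is empty. *)
Definition minl J : line := odflt ord0 [pick i in J | [forall k in J, i <= k]].

Lemma minlP J l : l \in J -> minl J \in J /\ {in J, forall k, minl J <= k}.
Proof.
move=> lJ; rewrite /minl; case: pickP => [i /andP[iJ /forall_inP] //|none].
have [i iJ imin] := arg_minnP (fun i : line => val i) lJ.
have iJ' : i \in J := iJ.
by move: (none i); rewrite iJ' => /negP[]; apply/forall_inP.
Qed.

Lemma minl_eq J l : l \in J -> {in J, forall k, l <= k} -> minl J = l.
Proof.
move=> lJ lmin; have [mJ mmin] := minlP lJ.
by apply: val_inj; apply/eqP; rewrite eqn_leq mmin // lmin.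
Qed.

Lemma minl_le J l : l \in J -> minl J <= l.
Proof. by move=> lJ; have [_] := minlP lJ; apply. Qed.

Definition tree_edge e : bool := (ord0 \in e.2) || (e.1 == minl e.2).

Definition nbc_edge (p : line * line) : edge n := (p.2, meet p.1 p.2).

Definition nbc_of_edge e : line * line := (minl e.2, e.1).

Definition fund_walk (p : line * line) : seq (vertex n) :=
  [:: inl ord0; inr (meet ord0 p.1); inl p.1; inr (meet p.1 p.2); inl p.2;
      inr (meet ord0 p.2)].

Definition fund_edges (p : line * line) : seq (edge n) :=
  [:: (ord0, meet ord0 p.1); (p.1, meet ord0 p.1); (p.1, meet p.1 p.2);
      (p.2, meet p.1 p.2); (p.2, meet ord0 p.2); (ord0, meet ord0 p.2)].

Definition fund_cycle (p : line * line) : {set edge n} := [set e in fund_edges p].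

Lemma cycle_edges_fund_walk p : cycle_edges (fund_walk p) = fund_cycle p.
Proof. by apply/setP=> e; rewrite !inE /= orbF !(eq_sym e). Qed.

Section NbcPair.
Variable p : line * line.
Hypothesis p_nbc : p \in nbc P.
Local Notation j := p.1.
Local Notation k := p.2.

Lemma nbc_meet : [/\ 0 < j, j < k & minl (meet j k) = j].
Proof.
move: p_nbc; rewrite inE => /and3P[j_gt0 jk /exists_inP[I IP /and3P[jI kI jmin]]].
have j_neq_k : j != k by rewrite neq_ltn jk.
split=> //; rewrite (meet_eq j_neq_k IP jI kI); apply: minl_eq => // i.
exact: (forall_inP jmin).
Qed.

Lemma nbc_neq : [/\ j != ord0, k != ord0 & j != k].
Proof.
have [j_gt0 jk _] := nbc_meet.
by rewrite -!(inj_eq val_inj) /= -!lt0n j_gt0 (ltn_trans j_gt0 jk) neq_ltn jk.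
Qed.

Lemma ord0_notin_meet : ord0 \notin meet j k.
Proof.
have [j_gt0 _ minj] := nbc_meet; apply/negP=> /minl_le.
by rewrite minj leqNgt j_gt0.
Qed.

Lemma nbc_meets_neq :
  [/\ meet ord0 j != meet j k, meet ord0 k != meet j k & meet ord0 j != meet ord0 k].
Proof.
have [j0 k0 jk] := nbc_neq; have o_jk := ord0_notin_meet.
have [Pj oj jj] := meet0P j0; have [_ ok kk] := meet0P k0.
split; apply: contraNneq o_jk.
- by move<-.
- by move<-.
- by move=> ojk; rewrite (meet_eq jk Pj jj) ?ojk.
Qed.

Lemma fund_walk_uniq : uniq (fund_walk p).
Proof.
have [j0 k0 jk] := nbc_neq; have [d1 d2 d3] := nbc_meets_neq.
rewrite /= !inE !(inj_eq inl_inj) !(inj_eq inr_inj) !(eq_sym ord0) (eq_sym (meet j k)).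
by rewrite (negbTE j0) (negbTE k0) (negbTE jk) (negbTE d1) (negbTE d2) (negbTE d3).
Qed.

Lemma fund_edges_uniq : uniq (fund_edges p).
Proof.
have [j0 k0 jk] := nbc_neq; have [d1 d2 d3] := nbc_meets_neq.
rewrite /= !inE !xpair_eqE !(eq_sym ord0) (eq_sym (meet j k) (meet ord0 k)).
by rewrite (negbTE j0) (negbTE k0) (negbTE jk) (negbTE d1) (negbTE d2) (negbTE d3) !andbF.
Qed.

Lemma fund_cycle_graph : is_graph_cycle P (fund_cycle p).
Proof.
have [j0 k0 jk] := nbc_neq; have [Pj oj jj] := meet0P j0; have [Pk ok kk] := meet0P k0.
have [Pjk jjk kjk] := meetP jk.
exists (fund_walk p); split; rewrite ?cycle_edges_fund_walk ?fund_walk_uniq //=.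
by rewrite Pj oj jj Pjk jjk kjk Pk kk ok.
Qed.

Lemma fund_cycle_space : in_cycle_space P (fund_cycle p).
Proof.
have [j0 k0 jk] := nbc_neq; have [Pj oj jj] := meet0P j0; have [Pk ok kk] := meet0P k0.
have [Pjk jjk kjk] := meetP jk.
split.
  apply/subsetP=> e; rewrite !inE => /or4P[| | |/or3P[| |]] /eqP-> /=;
  by rewrite ?Pj ?oj ?jj ?Pjk ?jjk ?kjk ?Pk ?kk ?ok.
(* every vertex of the hexagon lies on exactly two of its six edges *)
by case=> [l|J]; rewrite /= card_set_seq ?fund_edges_uniq //=;
  move: (_ == _) (_ == _) (_ == _) => [] [] [].
Qed.

Lemma nbc_edge_edges : nbc_edge p \in edges P.
Proof. by have [_ _ jk] := nbc_neq; have [Pjk _ kjk] := meetP jk; rewrite inE Pjk kjk. Qed.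

Lemma nbc_edge_nontree : ~~ tree_edge (nbc_edge p).
Proof.
have [_ _ jk] := nbc_neq; have [_ _ minj] := nbc_meet.
by rewrite /tree_edge negb_or ord0_notin_meet /= minj eq_sym.
Qed.

Lemma nbc_edgeK : nbc_of_edge (nbc_edge p) = p.
Proof. by have [_ _ minj] := nbc_meet; rewrite /nbc_of_edge /= minj -surjective_pairing. Qed.

Lemma fund_cycle_nontree e : ~~ tree_edge e -> (e \in fund_cycle p) = (e == nbc_edge p).
Proof.
move=> ntree; apply/idP/eqP=> [|->]; last by rewrite !inE eqxx !orbT.
have [j0 k0 _] := nbc_neq; have [_ oj _] := meet0P j0; have [_ ok _] := meet0P k0.
have [_ _ minj] := nbc_meet.
rewrite !inE => /or4P[| | |/or3P[| |]] /eqP e_eq //; move: ntree;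
  by rewrite e_eq /tree_edge /= ?oj ?ok ?minj ?eqxx ?orbT.
Qed.

End NbcPair.

Lemma nbc_of_edge_nbc e : e \in edges P -> ~~ tree_edge e -> nbc_of_edge e \in nbc P.
Proof.
case: e => l J; rewrite inE /tree_edge negb_or /= => /andP[JP lJ] /andP[J0 l_neq_m].
have [mJ mmin] := minlP lJ.
have m_lt_l : minl J < l by rewrite ltn_neqAle mmin // andbT (inj_eq val_inj) eq_sym.
have m_gt0 : 0 < minl J.
  by rewrite lt0n; apply: contraNneq J0 => m0; rewrite (_ : ord0 = minl J) //; apply: val_inj.
rewrite inE /= m_gt0 m_lt_l; apply/exists_inP; exists J => //.
by rewrite mJ lJ; apply/forall_inP.
Qed.

Lemma nbc_of_edgeK e : e \in edges P -> ~~ tree_edge e -> nbc_edge (nbc_of_edge e) = e.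
Proof.
case: e => l J; rewrite inE /tree_edge negb_or /= => /andP[JP lJ] /andP[_ l_neq_m].
by have [mJ _] := minlP lJ; rewrite /nbc_edge /= (meet_eq _ JP mJ lJ) // eq_sym.
Qed.

Lemma nbc_edge_inj : {in nbc P &, injective nbc_edge}.
Proof. exact: can_in_inj nbc_edgeK. Qed.

Lemma mem_nbc_edge_xorsum (S : {set line * line}) q : S \subset nbc P -> q \in nbc P ->
  (nbc_edge q \in xorsum S fund_cycle) = (q \in S).
Proof.
move=> /subsetP SN qN; rewrite in_xorsum.
have edge_q x : x \in S -> (nbc_edge q \in fund_cycle x) = (x == q).
  move=> /SN xN; rewrite fund_cycle_nontree ?nbc_edge_nontree //.
  by apply/eqP/eqP=> [/(nbc_edge_inj qN xN)|->].
case: (boolP (q \in S)) => qS; last first.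
  by rewrite big1 // => x xS; rewrite edge_q //; apply: contraNF qS => /eqP<-.
rewrite (bigD1 q) //= edge_q // eqxx big1 // => x /andP[xS xq].
by rewrite edge_q // (negbTE xq).
Qed.

Lemma fund_cycles_indep (S : {set line * line}) :
  S \subset nbc P -> S != set0 -> xorsum S fund_cycle != set0.
Proof.
move=> SN /set0Pn[q qS]; apply/set0Pn; exists (nbc_edge q).
by rewrite mem_nbc_edge_xorsum // (subsetP SN).
Qed.

Lemma tree_cycle_space_eq0 G :
  in_cycle_space P G -> {in G, forall e, tree_edge e} -> G = set0.
Proof.
move=> [/subsetP GE evenG] Gtree.
have edgeP e : e \in G -> e.2 \in P /\ e.1 \in e.2 by move/GE; rewrite inE => /andP.
have through_l0 : {in G, forall e, ord0 \in e.2}.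
  move=> e eG; apply/contraT=> J0.
  have lowest e' : e' \in G -> e'.2 = e.2 -> e'.1 = minl e.2.
    by move=> e'G e'J; move: (Gtree e' e'G); rewrite /tree_edge e'J (negbTE J0) => /eqP.
  move: (evenG (inr e.2)); rewrite (odd_deg_point eG) // => e' e'G e'J.
  by rewrite [e']surjective_pairing [e]surjective_pairing e'J !lowest.
have at_l0 : {in G, forall e, e.1 = ord0}.
  move=> e eG; apply/eqP/contraT=> l0.
  move: (evenG (inl e.1)); rewrite (odd_deg_line eG) // => e' e'G e'l.
  have [[JP lJ] [J'P lJ']] := (edgeP e eG, edgeP e' e'G); rewrite e'l in lJ'.
  rewrite [e']surjective_pairing [e]surjective_pairing e'l.
  by rewrite -(meet_eq l0 JP lJ (through_l0 e eG)) (meet_eq l0 J'P lJ' (through_l0 e' e'G)).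
apply/setP=> e; rewrite inE; apply/negP=> eG.
move: (evenG (inr e.2)); rewrite (odd_deg_point eG) // => e' e'G e'J.
by rewrite [e']surjective_pairing [e]surjective_pairing e'J !at_l0.
Qed.

Lemma fund_cycles_span F : in_cycle_space P F ->
  exists2 S : {set line * line}, S \subset nbc P & F = xorsum S fund_cycle.
Proof.
move=> Fcs; pose S := [set q in nbc P | nbc_edge q \in F].
have SN : S \subset nbc P by apply/subsetP=> q; rewrite inE => /andP[].
exists S => //; apply: symdiff_eq0.
have Gcs : in_cycle_space P (symdiff F (xorsum S fund_cycle)).
  apply/(in_cycle_space_symdiff Fcs)/in_cycle_space_xorsum => q /(subsetP SN).
  exact: fund_cycle_space.
apply: tree_cycle_space_eq0 => // e eG; apply/contraT=> ntree.
have eE : e \in edges P by apply: (subsetP Gcs.1).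
have qN := nbc_of_edge_nbc eE ntree.
move: eG; rewrite -(nbc_of_edgeK eE ntree) in_symdiff mem_nbc_edge_xorsum //.
by rewrite inE qN /= addbb.
Qed.

Lemma card_nontree_edges : #|edges P :\: [set e | tree_edge e]| = #|nbc P|.
Proof.
rewrite -(card_in_imset nbc_edge_inj); apply: eq_card => e.
apply/idP/imsetP=> [|[q qN ->]]; rewrite in_setD in_set; last first.
  by rewrite nbc_edge_nontree ?nbc_edge_edges.
move=> /andP[ntree eE].
by exists (nbc_of_edge e); rewrite ?nbc_of_edge_nbc ?nbc_of_edgeK.
Qed.

Definition tree_edge_at (v : vertex n) : edge n :=
  match v with inl l => (l, meet ord0 l) | inr J => (minl J, J) end.

Lemma tree_edge_at_inj : {in vertices P :\ inl ord0 &, injective tree_edge_at}.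
Proof.
have minl_meet0 l : l != ord0 -> minl (meet ord0 l) = ord0.
  by move=> l0; have [_ o _] := meet0P l0; apply: minl_eq.
case=> [l|J] [l'|J']; rewrite !inE ?(inj_eq inl_inj) ?andbT //= => v0 v'0 [].
- by move=> ->.
- move=> l_min m_eq; have := minl_meet0 _ v0.
  by rewrite m_eq -l_min => l0; rewrite l0 eqxx in v0.
- move=> l_min m_eq; have := minl_meet0 _ v'0.
  by rewrite -m_eq l_min => l0; rewrite l0 eqxx in v'0.
- by move=> _ ->.
Qed.

Lemma tree_edge_at_image :
  tree_edge_at @: (vertices P :\ inl ord0) = edges P :&: [set e | tree_edge e].
Proof.
apply/setP=> e; apply/imsetP/idP=> [[[l|J]] |].
- rewrite !inE (inj_eq inl_inj) andbT => l0 ->; have [Pl o lo] := meet0P l0.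
  by rewrite Pl lo /tree_edge o.
- rewrite !inE /= => JP ->; have [l lJ] := point_neq0 JP; have [mJ _] := minlP lJ.
  by rewrite JP mJ /tree_edge eqxx orbT.
case: e => l J; rewrite !inE /tree_edge /= => /andP[/andP[JP lJ] /orP[oJ|/eqP l_min]].
  have [l0 | l_neq0] := eqVneq l ord0.
    exists (inr J); rewrite ?inE ?JP //= l0.
    by rewrite (minl_eq oJ) // => i _; exact: leq0n.
  exists (inl l); rewrite ?inE ?l_neq0 //=.
  by rewrite (meet_eq _ JP oJ lJ) // eq_sym.
by exists (inr J); rewrite ?inE ?JP //= l_min.
Qed.

Lemma card_tree_edges :
  #|edges P :&: [set e | tree_edge e]| = #|vertices P :\ inl ord0|.
Proof. by rewrite -tree_edge_at_image (card_in_imset tree_edge_at_inj). Qed.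

Lemma connect_ord0 v : v \in vertices P -> connect (adj P) (inl ord0) v.
Proof.
have to_line l : connect (adj P) (inl ord0) (inl l).
  have [-> | l0] := eqVneq l ord0; first exact: connect0.
  have [Pl o lo] := meet0P l0.
  apply: (@connect_trans _ _ (inr (meet ord0 l))); apply: connect1; rewrite /= Pl //.
case: v => [l|J] // /[!inE] /= JP.
have [l lJ] := point_neq0 JP.
by apply: (connect_trans (to_line l)); apply: connect1; rewrite /= JP.
Qed.

Lemma ncomp_eq1 : ncomp P = 1.
Proof.
have adj_sym : symmetric (adj P) by case=> ? [].
rewrite /ncomp (_ : [set _ | v in _] = [set vertices P]) ?cards1 //.
apply/setP=> C; rewrite inE; apply/imsetP/eqP=> [[v vV ->]|->].
  apply/setP=> w; rewrite inE andb_idr // => wV.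
  rewrite (connect_trans _ (connect_ord0 wV)) //.
  by rewrite (sym_connect_sym adj_sym) connect_ord0.
exists (inl ord0); rewrite ?inE //; apply/setP=> w; rewrite inE.
by rewrite andb_idr // => /connect_ord0.
Qed.

Lemma betti1_nbc : betti1 P = (#|nbc P|%:Z)%R.
Proof.
have v0 : inl ord0 \in vertices P by rewrite inE.
rewrite /betti1 ncomp_eq1 -(cardsID [set e | tree_edge e] (edges P)).
rewrite card_tree_edges card_nontree_edges (cardsD1 (inl ord0) (vertices P)) v0 add1n.
move: #|vertices P :\ inl ord0| #|nbc P| => m k; lia.
Qed.

End Arrangement.

Theorem mainTheorem2 (n : nat) (P : {set {set 'I_n.+1}}) (hC : is_cla P) :
  (exists f : 'I_n.+1 * 'I_n.+1 -> {set edge n},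
     [/\ {in nbc P &, injective f},
         (forall p, p \in nbc P -> is_graph_cycle P (f p)),
         (forall S : {set 'I_n.+1 * 'I_n.+1}, S \subset nbc P -> S != set0 -> xorsum S f != set0) &
         (forall F, in_cycle_space P F ->
            exists2 S : {set 'I_n.+1 * 'I_n.+1}, S \subset nbc P & F = xorsum S f)])
  /\ betti1 P = ((#|nbc P|)%:Z)%R.
Proof.
split; last exact: betti1_nbc.
exists (fund_cycle P); split.
- exact/xorsum_indep_injective/fund_cycles_indep.
- exact: fund_cycle_graph.
- exact: fund_cycles_indep.
- exact: fund_cycles_span.
Qed.
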